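(* For every odd integer $\Delta \ge 1$ there is a local algorithm that, on every graph $\mathcal{G}=(V,E)$ without isolated nodes, of maximum degree at most $\Delta$, equipped with a port numbering and an orientation (and no colouring, no identifiers), outputs a dominating set $D$ with $|D| \le \Delta\,|D^*|$, where $D^*$ is a minimum dominating set of $\mathcal{G}$.
   Context: Model: a graph $\mathcal{G}=(V,E)$ without isolated nodes is a distributed system; every node runs the same deterministic algorithm. Communication is synchronous: in each round every node receives messages from its neighbours, performs local computation, and sends messages to its neighbours. Each node knows its degree and the global degree bound $\Delta$. A local algorithm is one that terminates after $T$ rounds, where $T$ may depend on $\Delta$ but not on the number of nodes; its output at a node is whether the node belongs to the solution. A port numbering means each node has a fixed ordering of its incident edges, known to it; nodes have no identifiers. An orientation chooses for each edge $\{u,v\}$ exactly one direction, and each node knows which of its incident edges are outgoing and which are incoming. *)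

From mathcomp Require Import all_boot.
Set Implicit Arguments. Unset Strict Implicit. Unset Printing Implicit Defensive.

(* A port-numbered, oriented simple graph on a finite vertex type V:
   - adj : symmetric irreflexive adjacency relation;
   - ports v : the neighbours of v listed in port order (port i of v leads to
     nth v (ports v) i); duplicate-free and listing exactly the neighbours;
   - out u v : the edge {u,v} is oriented from u to v. *)
Record pn_graph (V : finType) := PNGraph {
  adj : rel V;
  ports : V -> seq V;
  out : V -> V -> bool
}.

Definition wf_pn_graph (V : finType) (G : pn_graph V) (Delta : nat) : Prop :=
  (forall u v, adj G u v = adj G v u) /\
  (forall v, ~~ adj G v v) /\
  (forall v, uniq (ports G v)) /\
  (forall u v, (u \in ports G v) = adj G v u) /\
  (forall u v, adj G u v -> out G u v = ~~ out G v u) /\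
  (forall v, 0 < size (ports G v)) /\
  (forall v, size (ports G v) <= Delta).

(* A deterministic synchronous anonymous message-passing algorithm running
   for a fixed number of rounds.  Initially a node knows its degree and, for
   each of its ports, whether the incident edge is outgoing (the list
   [la_init] receives has one boolean per port, so its size is the degree).
   In each round, every node sends [la_send s i] on port i, then updates its
   state from its old state and the list of received messages (indexed by
   port). *)
Record local_alg := LocalAlg {
  la_state : Type;
  la_msg : Type;
  la_init : seq bool -> la_state;
  la_send : la_state -> nat -> la_msg;
  la_update : la_state -> seq la_msg -> la_state;
  la_output : la_state -> bool;
  la_rounds : nat
}.

Fixpoint run (A : local_alg) (V : finType) (G : pn_graph V) (t : nat)
  : V -> la_state A :=
  match t with
  | 0 => fun v => @la_init A [seq out G v u | u <- ports G v]
  | t'.+1 => fun v =>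
      let st := run A G t' in
      @la_update A (st v)
        [seq @la_send A (st u) (index v (ports G u)) | u <- ports G v]
  end.

Definition alg_output (A : local_alg) (V : finType) (G : pn_graph V) : {set V} :=
  [set v | @la_output A (run A G (la_rounds A) v)].

Definition dominating (V : finType) (G : pn_graph V) (D : {set V}) : Prop :=
  forall v, v \in D \/ exists2 u, u \in D & adj G v u.

Definition min_dominating (V : finType) (G : pn_graph V) (D : {set V}) : Prop :=
  dominating G D /\ forall D', dominating G D' -> #|D| <= #|D'|.

From mathcomp Require Import all_boot.
Set Implicit Arguments. Unset Strict Implicit. Unset Printing Implicit Defensive.

(* A node of degree exactly Delta is heavy.  Since Delta is odd, a heavy node
   has a strict majority of outgoing or of incoming edges.  Every heavy node
   joins D, except a mostly-incoming one with an incoming edge from a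
   mostly-outgoing one (which joins, and dominates it); a light node joins D
   iff no heavy neighbour did.

   For the bound, send unit charges along edges so that no node of D sends
   more than it receives, and one within distance one of a heavy node
   receives at least one unit more: a heavy node is paid along its majority
   side, a light one by its heavy neighbours.  As the charges cancel globally
   and a node outside D sends at most Delta, the number N of nodes within
   distance one of a heavy node is at most (Delta + 1) |V \ D|.  On the other
   hand, let a node weigh Delta + 1, minus one if it is within distance one
   of a heavy node; the closed neighbourhood of any node then weighs at most
   Delta (Delta + 1), so for a dominating set D* the total weight
   (Delta + 1) |V| - N is at most Delta (Delta + 1) |D*|. *)

Section SeqSums.
Variable I : eqType.

Lemma count_le_sum (s : seq I) (F : I -> nat) (P : pred I) :
  (forall u, u \in s -> P u -> 0 < F u) -> count P s <= \sum_(u <- s) F u.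
Proof.
elim: s => [|x s IH] Fpos; first by rewrite big_nil.
rewrite big_cons /=; apply: leq_add.
  by case Px: (P x) => //; apply: Fpos; rewrite ?mem_head.
by apply: IH => u us; apply: Fpos; rewrite inE us orbT.
Qed.

Lemma sum_le_count (s : seq I) (F : I -> nat) (P : pred I) :
  (forall u, u \in s -> F u <= P u) -> \sum_(u <- s) F u <= count P s.
Proof.
elim: s => [|x s IH] FleP; first by rewrite big_nil.
rewrite big_cons /=; apply: leq_add; first by apply: FleP; rewrite mem_head.
by apply: IH => u us; apply: FleP; rewrite inE us orbT.
Qed.

End SeqSums.

Lemma sum_nat_of_bool (T : finType) (P : pred T) :
  \sum_x (P x : nat) = #|[set x | P x]|.
Proof. by rewrite -sum1dep_card [RHS]big_mkcond; apply: eq_bigr => x _; case: (P x). Qed.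

Lemma majority_ltn a b : a + b < 2 * a -> b < a.
Proof. by rewrite mul2n -addnn ltn_add2l. Qed.

Lemma odd_minority_ltn a b : odd (a + b) -> ~~ (a + b < 2 * a) -> a < b.
Proof.
rewrite -leqNgt mul2n -addnn leq_add2l ltn_neqAle => odd_ab -> /[!andbT].
by apply: contraTneq odd_ab => ->; rewrite addnn odd_double.
Qed.

Section DominatingAlgorithm.
Variable Delta : nat.

Definition heavy_bits (bs : seq bool) := size bs == Delta.
Definition out_heavy_bits (bs : seq bool) :=
  heavy_bits bs && (size bs < 2 * count id bs).
Definition in_heavy_bits (bs : seq bool) := heavy_bits bs && ~~ out_heavy_bits bs.
Definition kept_bits (bs : seq bool) (nbs : seq (seq bool)) :=
  heavy_bits bs && ~~ (in_heavy_bits bs &&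
    has (fun p : bool * seq bool => ~~ p.1 && out_heavy_bits p.2) (zip bs nbs)).

(* A state holds the orientation bits of the node, whether it is a kept heavy
   node (valid from round 1 on), and whether it has no kept neighbour (valid
   from round 2 on). *)
Definition dom_state := (seq bool * bool * bool)%type.

Definition dom_update (s : dom_state) (ms : seq dom_state) : dom_state :=
  (s.1.1, kept_bits s.1.1 [seq m.1.1 | m <- ms], ~~ has id [seq m.1.2 | m <- ms]).

Definition dom_output (s : dom_state) := if heavy_bits s.1.1 then s.1.2 else s.2.

Definition dom_alg : local_alg :=
  @LocalAlg dom_state dom_state (fun bs => (bs, false, false)) (fun s _ => s)
    dom_update dom_output 2.

Variables (V : finType) (G : pn_graph V).

Definition heavy v := size (ports G v) == Delta.
Definition out_heavy v :=
  heavy v && (size (ports G v) < 2 * count (out G v) (ports G v)).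
Definition in_heavy v := heavy v && ~~ out_heavy v.
Definition dropped v :=
  in_heavy v && has (fun u => ~~ out G v u && out_heavy u) (ports G v).
Definition kept v := heavy v && ~~ dropped v.
Definition chosen v := if heavy v then kept v else ~~ has kept (ports G v).

Definition port_bits v := [seq out G v u | u <- ports G v].

Lemma heavy_bitsE v : heavy_bits (port_bits v) = heavy v.
Proof. by rewrite /heavy_bits size_map. Qed.

Lemma out_heavy_bitsE v : out_heavy_bits (port_bits v) = out_heavy v.
Proof. by rewrite /out_heavy_bits heavy_bitsE size_map count_map. Qed.

Lemma in_heavy_bitsE v : in_heavy_bits (port_bits v) = in_heavy v.
Proof. by rewrite /in_heavy_bits heavy_bitsE out_heavy_bitsE. Qed.

Lemma kept_bitsE v : kept_bits (port_bits v) [seq port_bits u | u <- ports G v] = kept v.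
Proof.
rewrite /kept_bits heavy_bitsE in_heavy_bitsE /port_bits zip_map has_map.
by congr (_ && ~~ (_ && _)); apply: eq_has => u /=; rewrite out_heavy_bitsE.
Qed.

Lemma run_dom_alg1 v : run dom_alg G 1 v = (port_bits v, kept v, true).
Proof.
rewrite /= /dom_update /= -!map_comp kept_bitsE has_map.
by rewrite (@eq_has _ _ pred0) ?has_pred0.
Qed.

Lemma run_dom_alg2 v :
  run dom_alg G 2 v = (port_bits v, kept v, ~~ has kept (ports G v)).
Proof.
change (run dom_alg G 2 v) with
  (dom_update (run dom_alg G 1 v) [seq run dom_alg G 1 u | u <- ports G v]).
by rewrite (eq_map run_dom_alg1) run_dom_alg1 /dom_update -!map_comp kept_bitsE has_map.
Qed.

Lemma alg_output_dom_alg : alg_output dom_alg G = [set v | chosen v].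
Proof. by apply/setP => v; rewrite !inE run_dom_alg2 /= /dom_output /= heavy_bitsE. Qed.

Hypothesis wfG : wf_pn_graph G Delta.

Lemma adj_sym u v : adj G u v = adj G v u.
Proof. by case: wfG. Qed.

Lemma adj_irr v : adj G v v = false.
Proof. by case: wfG => _ [/(_ v)/negbTE]. Qed.

Lemma uniq_ports v : uniq (ports G v).
Proof. by case: wfG => _ [_ []]. Qed.

Lemma mem_ports u v : (u \in ports G v) = adj G v u.
Proof. by case: wfG => _ [_ [_ []]]. Qed.

Lemma ports_sym u v : u \in ports G v -> v \in ports G u.
Proof. by rewrite !mem_ports adj_sym. Qed.

Lemma out_antisym u v : u \in ports G v -> out G u v = ~~ out G v u.
Proof. by case: wfG => _ [_ [_ [_ [anti _]]]]; rewrite mem_ports adj_sym; apply: anti. Qed.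

Lemma size_ports v : size (ports G v) <= Delta.
Proof. by case: wfG => _ [_ [_ [_ [_ []]]]]. Qed.

Lemma kept_chosen v : kept v -> chosen v.
Proof. by move=> Kv; rewrite /chosen; case/andP: (Kv) => ->. Qed.

Lemma out_heavy_kept v : out_heavy v -> kept v.
Proof. by move=> Ov; rewrite /kept /dropped /in_heavy Ov andbF andbT; case/andP: Ov. Qed.

Lemma light_nbr_unchosen u v :
  u \in ports G v -> kept v -> ~~ heavy u -> chosen u = false.
Proof.
move=> uv Kv /negbTE Lu; rewrite /chosen Lu; apply/negbF/hasP.
by exists v; first exact: ports_sym.
Qed.

Lemma chosen_dominating : dominating G [set v | chosen v].
Proof.
move=> v; rewrite inE; case Cv: (chosen v); [by left | right].
move: Cv; rewrite [chosen v]/chosen; case: ifP => Hv.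
- rewrite /kept /dropped Hv /= => /negbFE /andP [_ /hasP [u uv /andP [_ Ou]]].
  by exists u; rewrite ?inE -?mem_ports ?kept_chosen ?out_heavy_kept.
- by move=> /negbFE /hasP [u uv Ku]; exists u; rewrite ?inE -?mem_ports ?kept_chosen.
Qed.

Definition near_heavy v := heavy v || has heavy (ports G v).

Definition closed_nbhd d : {set V} := [set v | (v == d) || adj G d v].

Definition slack v := Delta.+1 - near_heavy v.

Lemma card_closed_nbhd d : #|closed_nbhd d| = (size (ports G d)).+1.
Proof.
have -> : closed_nbhd d = d |: [set v in ports G d].
  by apply/setP => v; rewrite !inE mem_ports.
rewrite cardsU1 inE mem_ports adj_irr add1n -(card_uniqP (uniq_ports d)).
by congr _.+1; apply: eq_card => v; rewrite inE.
Qed.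

Lemma sum_slack_closed_nbhd d : \sum_(v in closed_nbhd d) slack v <= Delta * Delta.+1.
Proof.
case Hd: (heavy d).
- have nearN v : v \in closed_nbhd d -> near_heavy v.
    rewrite inE /near_heavy => /orP [/eqP -> | dv]; first by rewrite Hd.
    by apply/orP; right; apply/hasP; exists d; rewrite // mem_ports adj_sym.
  have -> : \sum_(v in closed_nbhd d) slack v = \sum_(v in closed_nbhd d) Delta.
    by apply: eq_bigr => v /nearN; rewrite /slack => ->; rewrite subn1.
  by rewrite sum_nat_const card_closed_nbhd (eqP Hd) mulnC.
- apply: (@leq_trans (\sum_(v in closed_nbhd d) Delta.+1)).
    by apply: leq_sum => v _; rewrite leq_subr.
  rewrite sum_nat_const card_closed_nbhd leq_mul2r /= ltn_neqAle size_ports andbT.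
  by rewrite -/(heavy d) Hd.
Qed.

Lemma sum_slack_near_heavy :
  \sum_v slack v + #|[set v | near_heavy v]| = Delta.+1 * #|V|.
Proof.
rewrite -sum_nat_of_bool -big_split /= mulnC -sum_nat_const.
by apply: eq_bigr => v _; rewrite subnK // (leq_trans (leq_b1 _)).
Qed.

Lemma sum_slack_le_dominating (Ds : {set V}) : dominating G Ds ->
  \sum_v slack v <= #|Ds| * (Delta * Delta.+1).
Proof.
move=> domDs; rewrite -sum_nat_const.
apply: (@leq_trans (\sum_(d in Ds) \sum_(v in closed_nbhd d) slack v)); last first.
  by apply: leq_sum => d _; apply: sum_slack_closed_nbhd.
rewrite (exchange_big_dep predT) //=; apply: leq_sum => v _.
have [d dDs vd] : exists2 d, d \in Ds & v \in closed_nbhd d.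
  case: (domDs v) => [vDs | [u uDs vu]]; first by exists v; rewrite // inE eqxx.
  by exists u; rewrite // inE adj_sym vu orbT.
by rewrite (bigD1 d) /= ?leq_addr //; apply/andP.
Qed.

Lemma card_le_dominating (D Ds : {set V}) : dominating G Ds ->
  #|[set v | near_heavy v]| <= Delta.+1 * #|~: D| -> #|D| <= Delta * #|Ds|.
Proof.
move=> /sum_slack_le_dominating slack_le near_le.
rewrite -(leq_pmul2l (ltn0Sn Delta)) -(leq_add2r #|[set v | near_heavy v]|).
apply: leq_trans (leq_add (leqnn _) near_le) _.
rewrite -mulnDr cardsC -sum_slack_near_heavy leq_add2r.
apply: leq_trans slack_le _.
by rewrite [Delta.+1 * _]mulnC [Delta * #|Ds|]mulnC mulnA.
Qed.

Lemma sum_ports v (F : V -> nat) :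
  \sum_(u <- ports G v) F u = \sum_(u | adj G v u) F u.
Proof. by rewrite big_uniq ?uniq_ports //; apply: eq_bigl => u; rewrite mem_ports. Qed.

Lemma discharging (g : V -> V -> nat) (c e : V -> nat) :
  (forall v, c v + \sum_(u <- ports G v) g v u <= \sum_(u <- ports G v) g u v + e v) ->
  \sum_v c v <= \sum_v e v.
Proof.
move=> balance.
have flow : \sum_v \sum_(u <- ports G v) g u v = \sum_v \sum_(u <- ports G v) g v u.
  under eq_bigr => v _ do rewrite sum_ports big_mkcond.
  under [RHS]eq_bigr => v _ do rewrite sum_ports big_mkcond.
  rewrite exchange_big /=; apply: eq_bigr => u _; apply: eq_bigr => v _.
  by rewrite adj_sym.
have : \sum_v (c v + \sum_(u <- ports G v) g v u) <=
         \sum_v (\sum_(u <- ports G v) g u v + e v).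
  by apply: leq_sum => v _; apply: balance.
by rewrite !big_split /= flow [X in _ <= X]addnC leq_add2r.
Qed.

Definition charge u v : nat :=
  if heavy u && heavy v then
    [|| out_heavy u && ~~ out G u v, in_heavy u && out G u v
      | in_heavy u && out_heavy v && out G v u]
  else if heavy v then ~~ chosen u else if heavy u then chosen v else false.

Definition charge_in v := \sum_(u <- ports G v) charge u v.
Definition charge_out v := \sum_(u <- ports G v) charge v u.

Lemma charge_le1 u v : charge u v <= 1.
Proof. by rewrite /charge; case: ifP => _; [|case: ifP => _; [|case: ifP => _]]; rewrite ?leq_b1. Qed.

Lemma charge_out_le v : charge_out v <= Delta.
Proof.
apply: leq_trans (size_ports v); rewrite -(count_predT (ports G v)).
by apply: sum_le_count => u _; rewrite charge_le1.
Qed.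

Lemma balance_of_majority v (P : pred V) :
  (forall u, u \in ports G v -> P u -> 0 < charge u v) ->
  (forall u, u \in ports G v -> P u -> charge v u = 0) ->
  count (predC P) (ports G v) < count P (ports G v) ->
  1 + charge_out v <= charge_in v.
Proof.
move=> paid unpaid majP; apply: leq_trans (count_le_sum paid).
apply: leq_trans majP; rewrite add1n ltnS; apply: sum_le_count => u uv /=.
by case: (boolP (P u)) => Pu /=; [rewrite unpaid | apply: charge_le1].
Qed.

Lemma out_heavy_balance v : out_heavy v -> 1 + charge_out v <= charge_in v.
Proof.
move=> Ov; have /andP [Hv big_out] := Ov; have Kv := out_heavy_kept Ov.
apply: (@balance_of_majority v (out G v)) => [u uv vu|u uv vu|].
- rewrite /charge Hv andbT out_antisym // vu; case Hu: (heavy u) => /=.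
    by case Ou: (out_heavy u); rewrite // /in_heavy Hu Ou Ov.
  by rewrite (light_nbr_unchosen uv Kv) ?Hu.
- rewrite /charge Hv /= /in_heavy Ov !andbF vu /=.
  by case Hu: (heavy u); rewrite //= (light_nbr_unchosen uv Kv) ?Hu.
- by apply: majority_ltn; rewrite count_predC.
Qed.

Hypothesis Delta_odd : odd Delta.

Lemma in_heavy_balance v : in_heavy v -> kept v -> 1 + charge_out v <= charge_in v.
Proof.
move=> Iv Kv; have /andP [Hv nOv] := Iv.
have nOu u : u \in ports G v -> ~~ out G v u -> out_heavy u = false.
  move=> uv vu; apply: negbTE; move: Kv; rewrite /kept /dropped Iv Hv /=.
  by apply: contra => Ou; apply/hasP; exists u; rewrite ?vu.
apply: (@balance_of_majority v (predC (out G v))) => [u uv vu|u uv vu|].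
- rewrite /charge Hv andbT out_antisym // (negbTE vu); case Hu: (heavy u) => /=.
    by rewrite /in_heavy Hu nOu.
  by rewrite (light_nbr_unchosen uv Kv) ?Hu.
- rewrite /charge Hv /= (negbTE nOv) nOu // (negbTE vu) !andbF /=.
  by case Hu: (heavy u); rewrite //= (light_nbr_unchosen uv Kv) ?Hu.
- rewrite (eq_count (a2 := out G v)) => [|u]; last exact: negbK.
  apply: odd_minority_ltn; rewrite count_predC ?(eqP Hv) //.
  by move: nOv; rewrite /out_heavy Hv (eqP Hv).
Qed.

Lemma light_balance v : ~~ heavy v -> chosen v ->
  near_heavy v + charge_out v <= charge_in v.
Proof.
move=> /negbTE Lv Cv.
have -> : charge_out v = 0.
  rewrite /charge_out big1_seq // => u _; rewrite /charge Lv /=.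
  by case: (heavy u); rewrite ?Cv.
rewrite addn0 /near_heavy Lv /=; apply: leq_trans (count_le_sum (P := heavy) _).
  by rewrite has_count; case: count.
by move=> u _ Hu; rewrite /charge Lv Hu /= Cv.
Qed.

Lemma charge_balance v :
  near_heavy v + charge_out v <= charge_in v + Delta.+1 * ~~ chosen v.
Proof.
case Cv: (chosen v); last first.
  rewrite muln1; apply: leq_trans (leq_addl _ _).
  by rewrite -add1n leq_add ?leq_b1 ?charge_out_le.
rewrite muln0 addn0; case Hv: (heavy v); last by rewrite light_balance ?Hv.
have Kv : kept v by move: Cv; rewrite /chosen Hv.
rewrite /near_heavy Hv; case Ov: (out_heavy v); first exact: out_heavy_balance.
by apply: in_heavy_balance; rewrite // /in_heavy Hv Ov.
Qed.

Lemma card_near_heavy_le :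
  #|[set v | near_heavy v]| <= Delta.+1 * #|~: [set v | chosen v]|.
Proof.
have -> : ~: [set v | chosen v] = [set v | ~~ chosen v].
  by apply/setP => v; rewrite !inE.
by have := discharging charge_balance; rewrite -big_distrr /= !sum_nat_of_bool.
Qed.

End DominatingAlgorithm.

Theorem theorem8 (Delta : nat) (hodd : odd Delta) :
  exists A : local_alg,
    forall (V : finType) (G : pn_graph V),
      wf_pn_graph G Delta ->
      dominating G (alg_output A G) /\
      forall Dstar : {set V}, min_dominating G Dstar ->
        #|alg_output A G| <= Delta * #|Dstar|.
Proof.
exists (dom_alg Delta) => V G wfG; rewrite alg_output_dom_alg.
split; first exact: chosen_dominating.
move=> Dstar [dom_Dstar _]; apply: (card_le_dominating wfG dom_Dstar).
exact: card_near_heavy_le.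
Qed.
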